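(* Let $\beta$ be a distortion risk measure that is neither the mean $\mathbb{E}$ nor an affine function of the mean. Then recursively applying the risk-sensitive Bellman optimality operator $\mathcal{T}^*_\beta$ with respect to $\beta$, i.e. forming $Z_{k+1}=\mathcal{T}^*_\beta Z_k$ from an arbitrary initial value distribution $Z_0$, does not (in general) solve the RSRL objective, and $\beta[Z_k]$ is not guaranteed to converge to $\beta[Z^*]$. In particular, the inequality $\|\beta[\mathcal{T}^*_\beta Z_1]-\beta[\mathcal{T}^*_\beta Z_2]\|_\infty\le\gamma\|\beta[Z_1]-\beta[Z_2]\|_\infty$ is not guaranteed to hold for all value distributions $Z_1,Z_2$.
   Context: Consider an MDP with state space $\mathcal{S}$, action space $\mathcal{A}$, deterministic transition map $M:\mathcal{S}\times\mathcal{A}\to\mathcal{S}$, reward distribution $R(s,a)$ (a real random variable for each $(s,a)$), initial state distribution $\rho_0$ and discount $\gamma\in[0,1)$. A value distribution $Z$ assigns to each $(s,a)$ a real random variable $Z(s,a)$ with bounded moments; for a policy $\pi$, $Z^\pi(s,a)=\sum_{t\ge0}\gamma^t R(s_t,a_t)$ is the random discounted return starting from $(s,a)$ and following $\pi$. A distortion risk measure $\beta$ with distortion function $h_\beta:[0,1]\to[0,1]$ (continuous, non-decreasing) is $\beta[X]=\int_{-\infty}^{\infty}x\,\frac{\partial}{\partial x}(h_\beta\circ F_X)(x)\,dx$, where $F_X$ is the CDF of $X$; the mean corresponds to $h_\beta=\mathrm{id}$. Given $Z$, let $\pi_\beta(s)\in\arg\max_{a\in\mathcal{A}}\beta[Z(s,a)]$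 (ties broken arbitrarily), and define $\mathcal{T}^*_\beta Z(s,a)$ to have the same distribution as $R(s,a)+\gamma Z(s',A')$ with $s'=M(s,a)$, $A'\sim\pi_\beta(\cdot\mid s')$. The RSRL objective is to find a policy $\pi^*_\beta\in\arg\max_\pi\mathbb{E}_{S_0\sim\rho_0,A_0\sim\pi}\big[\beta[Z^\pi(S_0,A_0)]\big]$, with $Z^*$ the return distribution of such an optimal policy. For real-valued functions $f_1,f_2$ on $\mathcal{S}\times\mathcal{A}$, $\|f_1-f_2\|_\infty=\sup_{s,a}|f_1(s,a)-f_2(s,a)|$. *)

From HB Require Import structures.
From mathcomp Require Import all_boot all_order all_algebra.
From mathcomp Require Import all_classical all_reals all_analysis.
Set Implicit Arguments. Unset Strict Implicit. Unset Printing Implicit Defensive.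
Import Order.TTheory GRing.Theory Num.Theory.
Import numFieldNormedType.Exports.
Local Open Scope classical_set_scope.
Local Open Scope ring_scope.

(* Finitely supported real distributions, as lists of (value, probability). *)
Section FDist.
Variable R : realType.

Definition fdist := seq (R * R).

Definition fvalid (X : fdist) : Prop :=
  (forall p, p \in X -> 0 <= p.2) /\ \sum_(p <- X) p.2 = 1.

Definition fdirac (x : R) : fdist := [:: (x, 1)].

Definition fadd (X Y : fdist) : fdist :=
  [seq (p.1 + q.1, p.2 * q.2) | p <- X, q <- Y].

Definition fscale (c : R) (X : fdist) : fdist := [seq (c * p.1, p.2) | p <- X].

Definition fmix (A : finType) (w : A -> R) (D : A -> fdist) : fdist :=
  flatten [seq [seq (p.1, w a * p.2) | p <- D a] | a <- enum A].

Definition fcdf (X : fdist) (x : R) : R := \sum_(p <- X | p.1 <= x) p.2.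
Definition fcdf_lt (X : fdist) (x : R) : R := \sum_(p <- X | p.1 < x) p.2.

Definition fmean (X : fdist) : R := \sum_(p <- X) p.1 * p.2.

(* Distortion risk measure beta[X] = int x d(h o F_X)(x).  For a finitely
   supported X, h o F_X is a step function whose only jumps are at atoms x,
   of size h(F_X(x)) - h(F_X(x-)); the Stieltjes integral is the sum below. *)
Definition distortion (h : R -> R) (X : fdist) : R :=
  \sum_(x <- undup (map fst X)) x * (h (fcdf X x) - h (fcdf_lt X x)).

Definition distortion_fun (h : R -> R) : Prop :=
  (forall u, 0 <= u <= 1 -> 0 <= h u <= 1) /\
  {within `[0, 1], continuous h} /\
  (forall u v, 0 <= u -> u <= v -> v <= 1 -> h u <= h v).

Definition affine_in_mean (h : R -> R) : Prop :=
  exists a b : R, forall X, fvalid X -> distortion h X = a * fmean X + b.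

End FDist.

Section MDP.
Variables (R : realType) (S A : finType).
Variables (M : S -> A -> S) (Rw : S -> A -> fdist R) (gamma : R).

Definition vdist := S -> A -> fdist R.

Definition vvalid (Z : vdist) : Prop := forall s a, fvalid (Z s a).

Definition greedy (h : R -> R) (Z : vdist) (pi : S -> A) : Prop :=
  forall s a, distortion h (Z s a) <= distortion h (Z s (pi s)).

(* (T*_beta Z)(s,a) =d R(s,a) + gamma Z(s', pi_beta(s')), s' = M s a,
   with R(s,a) independent of Z(s', .) *)
Definition bellman (Z : vdist) (pi : S -> A) : vdist :=
  fun s a => fadd (Rw s a) (fscale gamma (Z (M s a) (pi (M s a)))).

Fixpoint iterZ (Z0 : vdist) (pis : nat -> S -> A) (k : nat) : vdist :=
  match k with
  | 0 => Z0
  | k'.+1 => bellman (iterZ Z0 pis k') (pis k')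
  end.

Definition greedy_seq (h : R -> R) (Z0 : vdist) (pis : nat -> S -> A) : Prop :=
  forall k, greedy h (iterZ Z0 pis k) (pis k).

Definition supnorm (f : S -> A -> R) : R :=
  \big[Num.max/0]_(s : S) \big[Num.max/0]_(a : A) `|f s a|.

Definition policy := S -> A -> R.
Definition valid_policy (pi : policy) : Prop :=
  (forall s a, 0 <= pi s a) /\ (forall s, \sum_(a : A) pi s a = 1).

(* law of the n-step discounted return sum_{t<n} gamma^t R(s_t,a_t)
   from (s,a) following pi, with independent rewards *)
Fixpoint nret (pi : policy) (n : nat) (s : S) (a : A) : fdist R :=
  match n with
  | 0 => fdirac 0
  | n'.+1 => fadd (Rw s a)
               (fscale gamma (fmix (pi (M s a)) (fun a' => nret pi n' (M s a) a')))
  end.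

Fixpoint traj (s : S) (acts : nat -> A) (t : nat) : S :=
  match t with
  | 0 => s
  | t'.+1 => M (traj s acts t') (acts t')
  end.

(* after H steps all rewards are deterministically 0: the infinite-horizon
   return Z^pi then has exactly the law nret pi H *)
Definition terminating (H : nat) : Prop :=
  forall s (acts : nat -> A) t, (H <= t)%N ->
    forall p, p \in Rw (traj s acts t) (acts t) -> p.1 = 0.

(* RSRL objective  E_{S0~rho0, A0~pi} beta[Z^pi(S0,A0)],  Z^pi = nret pi H *)
Definition rsrl_obj (h : R -> R) (rho0 : S -> R) (H : nat) (pi : policy) : R :=
  \sum_(s : S) rho0 s * \sum_(a : A) pi s a * distortion h (nret pi H s a).

Definition optimal (h : R -> R) (rho0 : S -> R) (H : nat) (pi : policy) : Prop :=
  valid_policy pi /\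
  forall pi', valid_policy pi' -> rsrl_obj h rho0 H pi' <= rsrl_obj h rho0 H pi.

End MDP.

From HB Require Import structures.
From mathcomp Require Import all_boot all_order all_algebra.
From mathcomp Require Import all_classical all_reals all_analysis.
From mathcomp Require Import ring lra.
Import Order.TTheory GRing.Theory Num.Theory.
Import numFieldNormedType.Exports.
Local Open Scope classical_set_scope.
Local Open Scope ring_scope.

(* If [h] is not affine, then [2 h(u) - h(u^2) - h(1 - (1 - u)^2)] is nonzero
   for some [u] in (0, 1): otherwise [h] minus its chord would satisfy
   [2 g(u) = g(u^2) + g(1 - (1 - u)^2)] and vanish at 0 and 1, and a positive
   maximum of [g] would propagate along [u, u^2, u^4, ...] down to [g(0) = 0].
   This defect measures how [beta] fails to commute with a Bellman backup: after
   a reward that is 0 with probability [u] and 1 otherwise, with discount 1/2,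
   the continuation that is 0 with probability [u] and 2 otherwise and a suitable
   constant have equal risk but backups whose risks differ by the defect, which
   breaks the contraction inequality.  Moving the constant by the defect makes
   the backup reverse the ranking of the two continuations; if they are the two
   actions of a decision state reached after that reward, greedy iteration
   settles on the locally better one, while an optimal policy does at least as
   well as the other one. *)

Set Implicit Arguments.
Unset Strict Implicit.

Section expectation.
Variable R : realType.
Implicit Types (X Y : fdist R) (f g h : R -> R) (x : R).

Definition fexpect X f := \sum_(p <- X) p.2 * f p.1.

Lemma eq_fexpect X f g : f =1 g -> fexpect X f = fexpect X g.
Proof. by move=> fg; apply: eq_bigr => p _; rewrite fg. Qed.

Lemma fexpect_fdirac x f : fexpect (fdirac x) f = f x.
Proof. by rewrite /fexpect big_seq1 mul1r. Qed.

Lemma fexpect_fadd X Y f :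
  fexpect (fadd X Y) f = fexpect X (fun x => fexpect Y (fun y => f (x + y))).
Proof.
rewrite /fexpect /fadd big_allpairs_dep; apply: eq_bigr => p _.
by rewrite mulr_sumr; apply: eq_bigr => q _; rewrite mulrA.
Qed.

Lemma fexpect_fscale c X f : fexpect (fscale c X) f = fexpect X (fun x => f (c * x)).
Proof. by rewrite /fexpect big_map. Qed.

Lemma fexpect_fmix (A : finType) (w : A -> R) (D : A -> fdist R) f :
  fexpect (fmix w D) f = \sum_(a : A) w a * fexpect (D a) f.
Proof.
rewrite /fexpect /fmix big_flatten big_map -big_enum; apply: eq_bigr => a _.
by rewrite big_map mulr_sumr; apply: eq_bigr => p _; rewrite mulrA.
Qed.

Lemma fexpect_sum X (A : finType) (w : A -> R) (F : A -> R -> R) :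
  fexpect X (fun x => \sum_(a : A) w a * F a x) = \sum_(a : A) w a * fexpect X (F a).
Proof.
rewrite /fexpect; under eq_bigr do rewrite mulr_sumr.
rewrite exchange_big; apply: eq_bigr => a _ /=.
by rewrite mulr_sumr; apply: eq_bigr => p _; rewrite mulrCA.
Qed.

Lemma fcdfE X x : fcdf X x = fexpect X (fun y => (y <= x)%R%:R).
Proof.
by rewrite /fcdf big_mkcond; apply: eq_bigr => p _; case: ifP; rewrite ?mulr1 ?mulr0.
Qed.

Lemma fcdf_ltE X x : fcdf_lt X x = fexpect X (fun y => (y < x)%R%:R).
Proof.
by rewrite /fcdf_lt big_mkcond; apply: eq_bigr => p _; case: ifP; rewrite ?mulr1 ?mulr0.
Qed.

Lemma fcdfB X x : fcdf X x - fcdf_lt X x = \sum_(p <- X | p.1 == x) p.2.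
Proof.
rewrite /fcdf /fcdf_lt (bigID (fun p => p.1 < x)) /=.
have lt_le y : (y <= x) && (y < x) = (y < x) by case: ltgtP.
under eq_bigl do rewrite lt_le; rewrite addrC.
by rewrite addrK; apply: eq_bigl => p; case: ltgtP.
Qed.

Lemma fcdf_notin X x : x \notin map fst X -> fcdf X x = fcdf_lt X x.
Proof.
move=> xX; apply/eqP; rewrite -subr_eq0 fcdfB big_seq_cond big_pred0 // => p.
by apply/andP => -[pX /eqP px]; rewrite -px map_f in xX.
Qed.

Lemma distortion_support h X (T : seq R) : uniq T -> {subset map fst X <= T} ->
  distortion h X = \sum_(x <- T) x * (h (fcdf X x) - h (fcdf_lt X x)).
Proof.
move=> uT XT; apply: perm_big_supp; apply: uniq_perm; rewrite ?filter_uniq ?undup_uniq //.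
move=> x; rewrite !mem_filter mem_undup; apply: andb_id2l => nz.
apply/idP/idP => [/XT //|_]; apply: contraNT nz => xX.
by rewrite fcdf_notin // subrr mulr0.
Qed.

Lemma eq_distortion h X Y : (forall f, fexpect X f = fexpect Y f) ->
  distortion h X = distortion h Y.
Proof.
move=> XY; have uT := undup_uniq (map fst X ++ map fst Y).
rewrite (@distortion_support _ X _ uT) => [|x xX]; last by rewrite mem_undup mem_cat xX.
rewrite (@distortion_support _ Y _ uT) => [|x xY]; last by rewrite mem_undup mem_cat xY orbT.
by apply: eq_bigr => x _; rewrite !fcdfE !fcdf_ltE !XY.
Qed.

End expectation.

Section distortion_values.
Variable R : realType.
Implicit Types (X Y : fdist R) (h : R -> R) (a b c x : R).

Lemma distortion_fdirac h x : distortion h (fdirac x) = x * (h 1 - h 0).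
Proof.
rewrite /distortion /fdirac /= big_cons big_nil /fcdf /fcdf_lt !big_cons !big_nil /=.
by rewrite lexx ltxx !addr0.
Qed.

Lemma distortion_atoms2 h a b (p q : R) : a < b ->
  distortion h [:: (a, p); (b, q)] = a * (h p - h 0) + b * (h (p + q) - h p).
Proof.
move=> ab; rewrite /distortion /= inE (lt_eqF ab) !big_cons big_nil /fcdf /fcdf_lt.
rewrite !big_cons !big_nil /= !lexx !ltxx (ltW ab) ab (lt_geF ab) (lt_gtF ab).
by rewrite !addr0.
Qed.

Lemma distortion_atoms3 h a b c (p q r : R) : a < b -> b < c ->
  distortion h [:: (a, p); (b, q); (c, r)] =
  a * (h p - h 0) + b * (h (p + q) - h p) + c * (h (p + q + r) - h (p + q)).
Proof.
move=> ab bc; have ac := lt_trans ab bc.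
rewrite /distortion /= !inE (lt_eqF ab) (lt_eqF ac) (lt_eqF bc) !big_cons big_nil.
rewrite /fcdf /fcdf_lt !big_cons !big_nil /= !lexx !ltxx (ltW ab) (ltW ac) (ltW bc).
rewrite ab ac bc (lt_geF ab) (lt_gtF ab) (lt_geF ac) (lt_gtF ac) (lt_geF bc) (lt_gtF bc).
by rewrite !addr0 !addrA.
Qed.

Lemma fvalid_fdirac x : fvalid (fdirac x).
Proof. by split; [move=> p; rewrite inE => /eqP -> | rewrite big_seq1]. Qed.

Lemma fvalid_fadd X Y : fvalid X -> fvalid Y -> fvalid (fadd X Y).
Proof.
move=> [X0 X1] [Y0 Y1]; split.
  by move=> pq /allpairsP[[p q] [/= pX qY ->]]; exact: mulr_ge0 (X0 _ pX) (Y0 _ qY).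
have mass (Z : fdist R) : \sum_(p <- Z) p.2 = fexpect Z (fun=> 1).
  by apply: eq_bigr => p _; rewrite mulr1.
by rewrite mass fexpect_fadd -[RHS]X1 mass; apply: eq_fexpect => x; rewrite -mass.
Qed.

Lemma fvalid_fscale c X : fvalid X -> fvalid (fscale c X).
Proof.
by move=> [X0 X1]; split; [move=> pq /mapP[p pX ->]; exact: X0 pX | rewrite big_map].
Qed.

Lemma fvalid_sum_cond X (P : pred R) : fvalid X -> 0 <= \sum_(p <- X | P p.1) p.2 <= 1.
Proof.
move=> [X0 X1]; have ge0 Q : 0 <= \sum_(p <- X | Q p) p.2.
  by rewrite big_seq_cond sumr_ge0 // => p /andP[/X0].
by rewrite ge0 -X1 (bigID (fun p => P p.1) predT) lerDl ge0.
Qed.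

Lemma fcdf_itv X x : fvalid X -> 0 <= fcdf X x <= 1.
Proof. exact: (fvalid_sum_cond (fun y => y <= x)). Qed.

Lemma fcdf_lt_itv X x : fvalid X -> 0 <= fcdf_lt X x <= 1.
Proof. exact: (fvalid_sum_cond (fun y => y < x)). Qed.

End distortion_values.

Section affine_distortion.
Variable R : realType.
Implicit Types (h : R -> R).

(* At an atom [x], the jump of an affine [h] is its slope times the mass of [x]. *)
Lemma affine_in_mean_affine h :
  (forall v, 0 <= v <= 1 -> h v = h 0 + (h 1 - h 0) * v) -> affine_in_mean h.
Proof.
move=> hA; exists (h 1 - h 0), 0 => X vX; rewrite addr0 /distortion /fmean.
have jump x : x * (h (fcdf X x) - h (fcdf_lt X x)) =
    (h 1 - h 0) * \sum_(p <- X | p.1 == x) p.1 * p.2.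
  rewrite hA ?fcdf_itv // [h (fcdf_lt X x)]hA ?fcdf_lt_itv //.
  rewrite opprD addrACA subrr add0r -mulrBr fcdfB mulrCA [x * _]mulr_sumr.
  by congr (_ * _); apply: eq_bigr => p /eqP ->.
under eq_bigr do rewrite jump.
rewrite -mulr_sumr; congr (_ * _).
rewrite (exchange_big_dep predT) //= big_seq [RHS]big_seq; apply: eq_bigr => p pX.
rewrite -big_filter (@eq_filter _ _ (pred1 p.1)) => [|y]; last exact: eq_sym.
by rewrite filter_pred1_uniq ?undup_uniq ?mem_undup ?map_f // big_seq1.
Qed.

Lemma nonaffine_distortion_fun_lt h :
  distortion_fun h -> ~ affine_in_mean h -> h 0 < h 1.
Proof.
move=> [_ [_ hmono]] naff; rewrite lt_neqAle hmono ?ler01 // andbT.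
apply: contra_notN naff => /eqP h10; apply: affine_in_mean_affine => v /andP[v0 v1].
have := hmono 0 v (lexx 0) v0 v1; have := hmono v 1 v0 v1 (lexx 1).
rewrite -h10 subrr mul0r addr0; lra.
Qed.

Lemma distortion_fdirac_div h t :
  h 0 < h 1 -> distortion h (fdirac (t / (h 1 - h 0))) = t.
Proof. by move=> h01; rewrite distortion_fdirac divfK // subr_eq0 gt_eqF. Qed.

End affine_distortion.

Section square_functional_equation.
Variable R : realType.

Lemma square_eq_le0 (g : R -> R) :
  {within `[0, 1], continuous g} -> g 0 = 0 -> g 1 = 0 ->
  (forall u, 0 < u < 1 -> 2 * g u = g (u ^+ 2) + g (1 - (1 - u) ^+ 2)) ->
  forall w, 0 <= w <= 1 -> g w <= 0.
Proof.
move=> cg g0 g1 gE w w01; rewrite leNgt; apply/negP => gw.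
have itv (v : R) : 0 <= v <= 1 -> v \in `[0, 1] by rewrite in_itv.
have [m /[!in_itv]/= /andP[m0 m1] gmax] := EVT_max ler01 cg.
have gm : 0 < g m := lt_le_trans gw (gmax _ (itv _ w01)).
have m_gt0 : 0 < m.
  by rewrite lt_neqAle m0 andbT; apply: contraTneq gm => <-; rewrite g0 ltxx.
have m_lt1 : m < 1.
  by rewrite lt_neqAle m1 andbT; apply: contraTneq gm => ->; rewrite g1 ltxx.
have gpow n : g (m ^+ (2 ^ n)) = g m.
  elim: n => [|n IH]; first by rewrite expr1.
  set v := m ^+ (2 ^ n) in IH *.
  have v01 : 0 < v < 1 by rewrite exprn_gt0 // exprn_ilt1 ?ltW // expn_eq0.
  have /andP[v0 v1] := v01.
  have sq01 : 0 <= v ^+ 2 <= 1 by apply/andP; split; nra.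
  have cosq01 : 0 <= 1 - (1 - v) ^+ 2 <= 1 by apply/andP; split; nra.
  have := gmax _ (itv _ sq01); have := gmax _ (itv _ cosq01).
  have := gE v v01; rewrite expnSr exprM -/v IH; lra.
have near0 : \forall x \near 0, x \in `[0, 1] -> `|g 0 - g x| < g m.
  have I0 : (0 : R) \in `[0, 1] by rewrite in_itv /= lexx ler01.
  by have /cvgrPdist_lt/(_ _ gm) := (subspace_continuousP _ _).1 cg 0 I0.
have m_norm : `|m| < 1 by rewrite ger0_norm.
have [N _ gN] := cvg_expr m_norm near0.
have /gN : (N <= 2 ^ N)%N by apply/ltnW/ltn_expl.
rewrite /= gpow g0 sub0r normrN gtr0_norm // ltxx itv ?exprn_ge0 ?exprn_ile1 //.
by move=> /(_ isT).
Qed.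

Lemma square_eq_eq0 (g : R -> R) :
  {within `[0, 1], continuous g} -> g 0 = 0 -> g 1 = 0 ->
  (forall u, 0 < u < 1 -> 2 * g u = g (u ^+ 2) + g (1 - (1 - u) ^+ 2)) ->
  forall w, 0 <= w <= 1 -> g w = 0.
Proof.
move=> cg g0 g1 gE w w01; apply/eqP; rewrite eq_le square_eq_le0 //=.
rewrite -oppr_le0; apply: (@square_eq_le0 (fun v => - g v)) => //.
- by move=> x; apply: cvgN; exact: cg.
- by rewrite g0 oppr0.
- by rewrite g1 oppr0.
- by move=> u /gE; lra.
Qed.

End square_functional_equation.

Section coin_defect.
Variable R : realType.
Implicit Types (h : R -> R) (u : R).

Definition coin_defect h u := 2 * h u - h (u ^+ 2) - h (1 - (1 - u) ^+ 2).

Lemma exists_coin_defect h : distortion_fun h -> ~ affine_in_mean h ->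
  exists2 u, 0 < u < 1 & coin_defect h u != 0.
Proof.
move=> [_ [hc _]] naff; apply: contrapT => nodef; apply: naff.
apply: affine_in_mean_affine => v v01.
pose g v := h v - (h 0 + (h 1 - h 0) * v).
have cg : {within `[0, 1], continuous g}.
  apply: within_continuousB => //; apply: continuous_subspaceT => x.
  by apply: cvgD; [exact: cvg_cst | apply: cvgM; [exact: cvg_cst | exact: cvg_id]].
have gE u : 0 < u < 1 -> 2 * g u = g (u ^+ 2) + g (1 - (1 - u) ^+ 2).
  move=> u01; have : coin_defect h u = 0.
    by apply/eqP/negPn/negP => defu; apply: nodef; exists u.
  suff : 2 * g u - (g (u ^+ 2) + g (1 - (1 - u) ^+ 2)) = coin_defect h u by lra.
  by rewrite /g /coin_defect; ring.
have g0 : g 0 = 0 by rewrite /g mulr0 addr0 subrr.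
have g1 : g 1 = 0 by rewrite /g; ring.
by have /eqP := square_eq_eq0 cg g0 g1 gE v01; rewrite subr_eq0 => /eqP.
Qed.

End coin_defect.

Lemma within_continuous_comp_sub {T U V : topologicalType} (A : set T) (B : set U)
    (f : T -> U) (g : U -> V) :
  {within A, continuous f} -> {within B, continuous g} -> f @` A `<=` B ->
  {within A, continuous (g \o f)}.
Proof.
move=> /subspace_continuousP cf /subspace_continuousP cg fAB.
apply/subspace_continuousP => x Ax; apply: cvg_comp (cg _ (fAB _ (imageP _ Ax))).
move=> P /= BP; have := cf x Ax _ BP; rewrite /= nbhs_simpl.
by apply: filter_app; apply: nearW => t At fP; exact: fP (fAB _ (imageP _ At)).
Qed.

Section mixture.
Variable R : realType.
Implicit Types (h : R -> R) (l : R).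

Definition bweight l (b : bool) : R := if b then l else 1 - l.

Lemma within_continuous_interpolate h (a b : R) :
  {within `[0, 1], continuous h} -> 0 <= a <= 1 -> 0 <= b <= 1 ->
  {within `[0, 1], continuous (fun l => h (l * a + (1 - l) * b))}.
Proof.
move=> hc /andP[a0 a1] /andP[b0 b1].
apply: (within_continuous_comp_sub (g := h)) hc _ => [|_ [l + <-]].
  apply: continuous_subspaceT => l; apply: cvgD; apply: cvgM.
  - exact: cvg_id.
  - exact: cvg_cst.
  - by apply: cvgB; [exact: cvg_cst | exact: cvg_id].
  - exact: cvg_cst.
by rewrite /= !in_itv /= => /andP[l0 l1]; apply/andP; split; nra.
Qed.

Lemma mem_fst_fmix (A : finType) (w : A -> R) (D : A -> fdist R) x :
  x \in map fst (fmix w D) -> exists a, x \in map fst (D a).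
Proof.
case/mapP=> q /flattenP[s /mapP[a _ ->] /mapP[p pD ->]] ->.
by exists a; rewrite /= map_f.
Qed.

Lemma fcdf_fmix (A : finType) (w : A -> R) (D : A -> fdist R) x :
  fcdf (fmix w D) x = \sum_(a : A) w a * fcdf (D a) x.
Proof. by rewrite fcdfE fexpect_fmix; under eq_bigr do rewrite -fcdfE. Qed.

Lemma fcdf_lt_fmix (A : finType) (w : A -> R) (D : A -> fdist R) x :
  fcdf_lt (fmix w D) x = \sum_(a : A) w a * fcdf_lt (D a) x.
Proof. by rewrite fcdf_ltE fexpect_fmix; under eq_bigr do rewrite -fcdf_ltE. Qed.

Lemma within_continuous_distortion_bweight h (D : bool -> fdist R) :
  {within `[0, 1], continuous h} -> (forall b, fvalid (D b)) ->
  {within `[0, 1], continuous (fun l => distortion h (fmix (bweight l) D))}.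
Proof.
move=> hc vD; set T := undup (map fst (D true) ++ map fst (D false)).
pose term x l := x * (h (l * fcdf (D true) x + (1 - l) * fcdf (D false) x)
                    - h (l * fcdf_lt (D true) x + (1 - l) * fcdf_lt (D false) x)).
have -> : (fun l => distortion h (fmix (bweight l) D)) = \sum_(x <- T) term x.
  apply/funext => l; rewrite fct_sumE (@distortion_support _ _ _ T) ?undup_uniq //.
    by apply: eq_bigr => x _; rewrite /term fcdf_fmix fcdf_lt_fmix !big_bool.
  by move=> x /mem_fst_fmix[[] xD]; rewrite mem_undup mem_cat xD ?orbT.
elim/big_ind: _ => [l|F G|x _ l].
- exact: cvg_cst.
- exact: within_continuousD.
- apply: cvgM; first exact: cvg_cst.
  by apply: within_continuousB; apply: within_continuous_interpolate;
    rewrite ?fcdf_itv ?fcdf_lt_itv.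
Qed.

End mixture.

Section coins.
Variable R : realType.
Implicit Types (h : R -> R) (u x : R) (Y : fdist R).

Definition coin u : fdist R := [:: (0, u); (1, 1 - u)].
Definition coin2 u : fdist R := [:: (0, u); (2, 1 - u)].

Definition coin_backup u Y := fadd (coin u) (fscale 2^-1 Y).

Lemma fexpect_coin_backup u Y f : fexpect (coin_backup u Y) f =
  fexpect (coin u) (fun r => fexpect Y (fun y => f (r + 2^-1 * y))).
Proof. by rewrite fexpect_fadd; under eq_fexpect do rewrite fexpect_fscale. Qed.

Lemma fvalid_coin u : 0 <= u <= 1 -> fvalid (coin u).
Proof.
move=> /andP[u0 u1]; split; last by rewrite !big_cons big_nil /=; ring.
by move=> p; rewrite !inE => /orP[] /eqP -> //=; rewrite subr_ge0.
Qed.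

Lemma fvalid_coin2 u : 0 <= u <= 1 -> fvalid (coin2 u).
Proof.
move=> /andP[u0 u1]; split; last by rewrite !big_cons big_nil /=; ring.
by move=> p; rewrite !inE => /orP[] /eqP -> //=; rewrite subr_ge0.
Qed.

Lemma distortion_coin h u : distortion h (coin u) = h 1 - h u.
Proof. by rewrite distortion_atoms2 ?ltr01 // subrKC; ring. Qed.

Lemma distortion_coin2 h u : distortion h (coin2 u) = 2 * (h 1 - h u).
Proof. by rewrite distortion_atoms2 ?ltr0n // subrKC; ring. Qed.

Lemma distortion_coin_backup_coin2 h u :
  distortion h (coin_backup u (coin2 u)) = distortion h (coin2 u) + coin_defect h u.
Proof.
have -> : distortion h (coin_backup u (coin2 u)) =
    distortion h [:: (0, u ^+ 2); (1, 2 * u * (1 - u)); (2, (1 - u) ^+ 2)].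
  apply: eq_distortion => f.
  rewrite /fexpect /coin_backup /fadd /fscale /= !big_cons !big_nil /=.
  by rewrite !mulr0 !addr0 add0r mulVf ?pnatr_eq0 // -[1 + 1]/2; ring.
rewrite distortion_atoms3 ?ltr01 ?ltr1n // distortion_coin2 /coin_defect.
have -> : u ^+ 2 + 2 * u * (1 - u) + (1 - u) ^+ 2 = 1 by ring.
have -> : u ^+ 2 + 2 * u * (1 - u) = 1 - (1 - u) ^+ 2 by ring.
ring.
Qed.

Lemma distortion_coin_backup_fdirac h u x :
  distortion h (coin_backup u (fdirac x)) =
  distortion h (coin u) + 2^-1 * distortion h (fdirac x).
Proof.
have -> : distortion h (coin_backup u (fdirac x)) =
    distortion h [:: (2^-1 * x, u); (1 + 2^-1 * x, 1 - u)].
  apply: eq_distortion => f.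
  by rewrite /fexpect /coin_backup /fadd /fscale /= !big_cons !big_nil /= add0r !mulr1.
rewrite distortion_atoms2 ?ltrDr ?ltr01 // distortion_coin distortion_fdirac subrKC.
ring.
Qed.

Lemma coin_backup_reversal h u : h 0 < h 1 -> 0 <= u <= 1 -> coin_defect h u != 0 ->
  exists X : bool -> fdist R, [/\ forall b, fvalid (X b),
    distortion h (X true) < distortion h (X false) &
    distortion h (coin_backup u (X false)) < distortion h (coin_backup u (X true))].
Proof.
move=> h01 u01; set K := distortion h (coin2 u); set d := coin_defect h u => d0.
pose D := fdirac ((K + d) / (h 1 - h 0)).
have vD : fvalid D := fvalid_fdirac _.
have bD : distortion h D = K + d := distortion_fdirac_div _ h01.
have bbD : distortion h (coin_backup u D) = K + d / 2.
  rewrite distortion_coin_backup_fdirac bD distortion_coin.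
  by have := distortion_coin2 h u; rewrite -/K; lra.
have bbC : distortion h (coin_backup u (coin2 u)) = K + d.
  exact: distortion_coin_backup_coin2.
have vC := fvalid_coin2 u01; have bC : distortion h (coin2 u) = K by [].
move: d0; rewrite neq_lt => /orP[d_lt0|d_gt0].
- exists (fun b => if b then D else coin2 u); split => [[]|/=|/=] //; lra.
- exists (fun b => if b then coin2 u else D); split => [[]|/=|/=] //; lra.
Qed.

Lemma coin_backup_separates h u : h 0 < h 1 -> coin_defect h u != 0 ->
  distortion h (coin_backup u (coin2 u)) !=
  distortion h (coin_backup u (fdirac (distortion h (coin2 u) / (h 1 - h 0)))).
Proof.
move=> h01 d0; rewrite distortion_coin_backup_coin2 distortion_coin_backup_fdirac.
rewrite distortion_fdirac_div // distortion_coin distortion_coin2.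
by apply: contra d0 => /eqP E; apply/eqP; lra.
Qed.

End coins.

Section mdp.
Variables (R : realType) (S A : finType).
Variables (M : S -> A -> S) (Rw : S -> A -> fdist R) (gamma : R).

Lemma fexpect_nret1 (pi : policy R S A) s a f : valid_policy pi ->
  fexpect (nret M Rw gamma pi 1 s a) f = fexpect (Rw s a) f.
Proof.
move=> [_ pi1]; rewrite fexpect_fadd; apply: eq_fexpect => r.
rewrite fexpect_fscale fexpect_fmix.
under eq_bigr do rewrite fexpect_fdirac mulr0 addr0.
by rewrite -mulr_suml pi1 mul1r.
Qed.

Lemma ler_norm_supnorm (f : S -> A -> R) s a : `|f s a| <= supnorm f.
Proof.
rewrite /supnorm; apply: (bigmax_sup_seq _ s) (mem_index_enum s) _ _ => //.
exact: (le_bigmax_seq _ a) (mem_index_enum a) _.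
Qed.

Lemma supnorm_eq0 (f : S -> A -> R) : (forall s a, f s a = 0) -> supnorm f = 0.
Proof.
move=> f0; apply: bigmax_eq_id => s _; apply: bigmax_le => // a _.
by rewrite f0 normr0.
Qed.

End mdp.

Lemma valid_policy_false (R : realType) (S : finType) (pi : policy R S bool) s :
  valid_policy pi -> pi s false = 1 - pi s true.
Proof. by move=> [_ /(_ s)]; rewrite big_bool /= => <-; ring. Qed.

Lemma valid_policy_itv (R : realType) (S : finType) (pi : policy R S bool) s :
  valid_policy pi -> 0 <= pi s true <= 1.
Proof.
move=> vpi; have [pi0 _] := vpi; have := pi0 s false.
by rewrite valid_policy_false // pi0 /= subr_ge0.
Qed.

Lemma valid_policy_bweight (R : realType) (S : finType) (l : R) :
  0 <= l <= 1 -> valid_policy (fun _ : S => bweight l).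
Proof.
move=> /andP[l0 l1]; split => [_ []|_]; rewrite ?big_bool /= ?subr_ge0 //.
by rewrite subrKC.
Qed.

Section contraction_counterexample.
Variables (R : realType) (h : R -> R) (u : R) (Y1 Y2 : fdist R).

Lemma bellman_not_contraction : 0 <= u <= 1 -> fvalid Y1 -> fvalid Y2 ->
  distortion h Y1 = distortion h Y2 ->
  distortion h (coin_backup u Y1) != distortion h (coin_backup u Y2) ->
  exists (S A : finType) (M : S -> A -> S) (Rw : S -> A -> fdist R)
         (gamma : R) (Z1 Z2 : vdist R S A),
    (0 < #|A|)%N /\
    (forall s a, fvalid (Rw s a)) /\
    0 <= gamma < 1 /\
    vvalid Z1 /\ vvalid Z2 /\
    (forall pi1 pi2, greedy h Z1 pi1 -> greedy h Z2 pi2 ->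
       ~ (supnorm (fun s a => distortion h (bellman M Rw gamma Z1 pi1 s a)
                            - distortion h (bellman M Rw gamma Z2 pi2 s a))
          <= gamma * supnorm (fun s a => distortion h (Z1 s a)
                                       - distortion h (Z2 s a)))).
Proof.
move=> u01 vY1 vY2 eqY neqY.
exists unit, unit, (fun _ _ => tt), (fun _ _ => coin u), 2^-1,
  (fun _ _ => Y1), (fun _ _ => Y2).
split; first by rewrite card_unit.
split; first by move=> _ _; exact: fvalid_coin.
split; first by apply/andP; split; lra.
do 2 (split; first by move=> _ _).
move=> pi1 pi2 _ _; rewrite [X in _ * X]supnorm_eq0 => [|_ _]; last by rewrite eqY subrr.
rewrite mulr0 => /(le_trans (ler_norm_supnorm _ tt tt)); rewrite normr_le0 subr_eq0.
exact/negP.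
Qed.

End contraction_counterexample.

Section greedy_trap.
Variables (R : realType) (h : R -> R) (u : R) (X : bool -> fdist R).

Local Notation start := (@None bool).
Local Notation decide := (Some true).
Local Notation stop := (Some false).

Definition trap_next (s : option bool) (a : bool) : option bool :=
  if s is None then decide else stop.

Definition trap_reward (s : option bool) (a : bool) : fdist R :=
  match s with None => coin u | Some true => X a | Some false => fdirac 0 end.

Definition trap_init (s : option bool) : R := if s is None then 1 else 0.

Definition trap_Z0 : vdist R (option bool) bool := fun _ _ => fdirac 0.

Definition trap_mix (l : R) : fdist R := fmix (bweight l) (fun b => coin_backup u (X b)).

Local Notation ret := (nret trap_next trap_reward 2^-1).
Local Notation iter := (iterZ trap_next trap_reward 2^-1 trap_Z0).

Lemma trap_terminating : terminating trap_next trap_reward 2.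
Proof.
move=> s acts [|[|t]] // _ p.
have -> : traj trap_next s acts t.+2 = stop by rewrite /= /trap_next; case: (traj _ _ _ t).
by rewrite /= inE => /eqP ->.
Qed.

Lemma distortion_trap_return (pi : policy R (option bool) bool) a :
  valid_policy pi -> distortion h (ret pi 2 start a) = distortion h (trap_mix (pi decide true)).
Proof.
move=> vpi; apply: eq_distortion => f.
rewrite [LHS]fexpect_fadd; under eq_fexpect => r do rewrite fexpect_fscale fexpect_fmix.
under eq_fexpect => r do under eq_bigr => b _ do rewrite fexpect_nret1 //.
rewrite fexpect_sum /trap_mix fexpect_fmix !big_bool /= -(valid_policy_false _ vpi).
by rewrite !fexpect_coin_backup.
Qed.

Lemma trap_rsrl_obj (pi : policy R (option bool) bool) : valid_policy pi ->
  rsrl_obj trap_next trap_reward 2^-1 h trap_init 2 pi =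
  distortion h (trap_mix (pi decide true)).
Proof.
move=> vpi; rewrite /rsrl_obj (bigD1 start) //=.
rewrite [X in _ + X]big1 => [|[b _|//]]; last exact: mul0r.
under eq_bigr do rewrite distortion_trap_return //.
by rewrite -mulr_suml (proj2 vpi) !mul1r addr0.
Qed.

Lemma distortion_trap_mix1 : distortion h (trap_mix 1) = distortion h (coin_backup u (X true)).
Proof.
by apply: eq_distortion => f; rewrite fexpect_fmix big_bool /= subrr mul0r addr0 mul1r.
Qed.

Lemma fexpect_iter_stop pis k c f : fexpect (iter pis k stop c) f = f 0.
Proof.
elim: k c f => [|k IH] c f; first exact: fexpect_fdirac.
by rewrite /= /bellman fexpect_fadd fexpect_fdirac fexpect_fscale IH mulr0 !addr0.
Qed.

Lemma fexpect_iter_decide pis k b f : fexpect (iter pis k.+1 decide b) f = fexpect (X b) f.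
Proof.
rewrite /= /bellman fexpect_fadd; apply: eq_fexpect => x.
by rewrite fexpect_fscale fexpect_iter_stop mulr0 addr0.
Qed.

Lemma fexpect_iter_start pis k a f :
  fexpect (iter pis k.+2 start a) f = fexpect (coin_backup u (X (pis k.+1 decide))) f.
Proof.
rewrite [iter _ k.+2 _ _]/= /bellman /coin_backup !fexpect_fadd; apply: eq_fexpect => r.
by rewrite !fexpect_fscale fexpect_iter_decide.
Qed.

Hypotheses (u01 : 0 <= u <= 1) (vX : forall b, fvalid (X b)).

Lemma trap_optimal_exists : {within `[0, 1], continuous h} ->
  exists pistar, optimal trap_next trap_reward 2^-1 h trap_init 2 pistar.
Proof.
move=> hc; have vY b : fvalid (coin_backup u (X b)).
  exact: fvalid_fadd (fvalid_coin u01) (fvalid_fscale _ (vX b)).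
have := EVT_max ler01 (within_continuous_distortion_bweight hc vY).
case=> l /[!in_itv]/= l01 lmax.
have vl : valid_policy (fun _ : option bool => bweight l) := valid_policy_bweight _ l01.
exists (fun _ => bweight l); split => // pi vpi.
by rewrite !trap_rsrl_obj //=; apply: lmax; rewrite in_itv /= valid_policy_itv.
Qed.

Lemma trap_optimal_ge pistar : optimal trap_next trap_reward 2^-1 h trap_init 2 pistar ->
  distortion h (coin_backup u (X true)) <= distortion h (ret pistar 2 start true).
Proof.
move=> [vps opt]; have one01 : 0 <= (1 : R) <= 1 by rewrite ler01 lexx.
have vpure : valid_policy (fun _ : option bool => bweight 1) := valid_policy_bweight _ one01.
have := opt _ vpure; rewrite !trap_rsrl_obj // [bweight 1 true]/= distortion_trap_mix1.
by rewrite distortion_trap_return.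
Qed.

Hypothesis greedy_gap : distortion h (X true) < distortion h (X false).

Lemma trap_iter_cvg pis : greedy_seq trap_next trap_reward 2^-1 h trap_Z0 pis ->
  (fun k => distortion h (iter pis k start true)) @ \oo -->
  distortion h (coin_backup u (X false)).
Proof.
move=> gpis; apply: cvg_near_cst; exists 2%N => // -[|[|k]] // _.
have decide_false : pis k.+1 decide = false.
  have := gpis k.+1 decide false.
  rewrite !(eq_distortion _ (fexpect_iter_decide _ _ _)).
  by case: (pis k.+1 decide) => //; rewrite leNgt greedy_gap.
by apply: eq_distortion => f; rewrite fexpect_iter_start decide_false.
Qed.

Hypothesis backup_gap :
  distortion h (coin_backup u (X false)) < distortion h (coin_backup u (X true)).

Lemma bellman_iteration_fails : {within `[0, 1], continuous h} ->
  exists (S A : finType) (M : S -> A -> S) (Rw : S -> A -> fdist R)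
         (rho0 : S -> R) (gamma : R) (H : nat) (Z0 : vdist R S A),
    (0 < #|A|)%N /\
    (forall s a, fvalid (Rw s a)) /\
    (forall s, 0 <= rho0 s) /\ \sum_(s : S) rho0 s = 1 /\
    0 <= gamma < 1 /\
    terminating M Rw H /\
    vvalid Z0 /\
    (exists pistar, optimal M Rw gamma h rho0 H pistar) /\
    (forall pistar, optimal M Rw gamma h rho0 H pistar ->
     forall pis, greedy_seq M Rw gamma h Z0 pis ->
     exists s a,
       ~ ((fun k => distortion h (iterZ M Rw gamma Z0 pis k s a)) @ \oo
            --> distortion h (nret M Rw gamma pistar H s a))).
Proof.
move=> hc; exists (option bool), bool, trap_next, trap_reward, trap_init, 2^-1, 2%N, trap_Z0.
split; first by rewrite card_bool.
split; first by move=> [[]|] a /=; [exact: vX | exact: fvalid_fdirac | exact: fvalid_coin].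
split; first by move=> [s|] /=; rewrite ?ler01 ?lexx.
split; first by rewrite (bigD1 start) //= big1 ?addr0 // => -[s|].
split; first by apply/andP; split; lra.
split; first exact: trap_terminating.
split; first by move=> s a; exact: fvalid_fdirac.
split; first exact: trap_optimal_exists.
move=> pistar opt pis gpis; exists start, true => conv.
have := trap_optimal_ge opt.
by rewrite (cvg_unique (@Rhausdorff R) conv (trap_iter_cvg gpis)) leNgt backup_gap.
Qed.

End greedy_trap.

Unset Implicit Arguments.
Set Strict Implicit.

Theorem mainTheorem1 (R : realType) (h : R -> R) :
  distortion_fun h -> ~ affine_in_mean h ->
  (* (i) iterating T*_beta does not in general reach beta[Z*] *)
  (exists (S A : finType) (M : S -> A -> S) (Rw : S -> A -> fdist R)
          (rho0 : S -> R) (gamma : R) (H : nat) (Z0 : vdist R S A),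
      (0 < #|A|)%N /\
      (forall s a, fvalid (Rw s a)) /\
      (forall s, 0 <= rho0 s) /\ \sum_(s : S) rho0 s = 1 /\
      0 <= gamma < 1 /\
      terminating M Rw H /\
      vvalid Z0 /\
      (exists pistar, optimal M Rw gamma h rho0 H pistar) /\
      (forall pistar, optimal M Rw gamma h rho0 H pistar ->
       forall pis, greedy_seq M Rw gamma h Z0 pis ->
       exists s a,
         ~ ((fun k => distortion h (iterZ M Rw gamma Z0 pis k s a)) @ \oo
              --> distortion h (nret M Rw gamma pistar H s a)))) /\
  (* (ii) the gamma-contraction inequality in beta fails for some Z1, Z2 *)
  (exists (S A : finType) (M : S -> A -> S) (Rw : S -> A -> fdist R)
          (gamma : R) (Z1 Z2 : vdist R S A),
      (0 < #|A|)%N /\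
      (forall s a, fvalid (Rw s a)) /\
      0 <= gamma < 1 /\
      vvalid Z1 /\ vvalid Z2 /\
      (forall pi1 pi2, greedy h Z1 pi1 -> greedy h Z2 pi2 ->
         ~ (supnorm (fun s a => distortion h (bellman M Rw gamma Z1 pi1 s a)
                              - distortion h (bellman M Rw gamma Z2 pi2 s a))
            <= gamma * supnorm (fun s a => distortion h (Z1 s a)
                                         - distortion h (Z2 s a))))).
Proof.
move=> hd naff; have [_ [hc _]] := hd.
have h01 := nonaffine_distortion_fun_lt hd naff.
have [u /andP[u0 u1] defect] := exists_coin_defect hd naff.
have u01 : 0 <= u <= 1 by rewrite !ltW.
split.
  have [X [vX gap backup_gap]] := coin_backup_reversal h01 u01 defect.
  exact: bellman_iteration_fails u01 vX gap backup_gap hc.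
apply: bellman_not_contraction (coin_backup_separates h01 defect) => //.
- exact: fvalid_coin2.
- exact: fvalid_fdirac.
- by rewrite distortion_fdirac_div.
Qed.
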